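(* Let $\Sigma$ be a fan in $\Lambda_{\mathbb Q}$ with support $|\Sigma|$ contained in the positive Weyl chamber $\Lambda^+_{\mathbb Q}$. If $W\Sigma$ has convex support, then for every $x\in|\Sigma|$ and every face $F$ of $\Lambda^+_{\mathbb Q}$, the orthogonal projection of $x$ onto the linear span of $F$ is also contained in $|\Sigma|$.
   Context: $G$ is a split reductive group with maximal torus $T$, cocharacter lattice $\Lambda$, Weyl group $W$ acting on $\Lambda_{\mathbb Q}$, and positive Weyl chamber $\Lambda^+_{\mathbb Q}$. Orthogonal projection is taken with respect to a $W$-invariant inner product (e.g. for a wall, the projection onto the hyperplane annihilated by a simple root $\alpha_i$ is $x\mapsto x-\frac{\alpha_i\cdot x}{2}\alpha_i^\vee$). $W\Sigma$ is the fan of cones $w\sigma$, $w\in W$, $\sigma\in\Sigma$. *)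

(* Lambda_Q = 'rV[rat]_n (cocharacter lattice Lambda = Z^n),
   characters / roots are also encoded as row vectors, paired with the
   standard dot product. *)
From HB Require Import structures.
From mathcomp Require Import all_boot all_order all_algebra.
Set Implicit Arguments. Unset Strict Implicit. Unset Printing Implicit Defensive.
Import Order.TTheory GRing.Theory Num.Theory.
Local Open Scope ring_scope.

Section Defs.
Variable n : nat.
Notation V := 'rV[rat]_n.

Definition pair (phi x : V) : rat := \sum_(j < n) phi ord0 j * x ord0 j.

Definition integral (v : V) : Prop := forall j, v ord0 j \is a Num.int.

Definition srefl (r : nat) (alpha coalpha : 'I_r -> V) (i : 'I_r) (x : V) : V :=
  x - pair (alpha i) x *: coalpha i.

Definition wact (r : nat) (alpha coalpha : 'I_r -> V) (w : seq 'I_r) (x : V) : V :=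
  foldr (srefl alpha coalpha) x w.

(* Simple roots / simple coroots of the root datum of a split reductive group:
   integral on the lattice Z^n, Cartan matrix conditions, and finite Weyl group. *)
Definition reductive_root_datum (r : nat) (alpha coalpha : 'I_r -> V) : Prop :=
  [/\ forall i, integral (alpha i) /\ integral (coalpha i),
      forall i, pair (alpha i) (coalpha i) = 2,
      forall i j, i != j -> pair (alpha i) (coalpha j) <= 0,
      forall i j, pair (alpha i) (coalpha j) = 0 <-> pair (alpha j) (coalpha i) = 0
    & exists ws : seq (seq 'I_r), forall w : seq 'I_r,
        exists2 w', w' \in ws & forall x, wact alpha coalpha w x = wact alpha coalpha w' x].

Definition ip (B : 'M[rat]_n) (x y : V) : rat := (x *m B *m y^T) ord0 ord0.

Definition W_invariant_inner_product (r : nat) (alpha coalpha : 'I_r -> V)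
  (B : 'M[rat]_n) : Prop :=
  [/\ B^T = B,
      forall x : V, x != 0 -> 0 < ip B x x
    & forall i x y, ip B (srefl alpha coalpha i x) (srefl alpha coalpha i y) = ip B x y].

Definition chamber (r : nat) (alpha : 'I_r -> V) (x : V) : Prop :=
  forall i, 0 <= pair (alpha i) x.

Definition is_face (C F : V -> Prop) : Prop :=
  exists phi : V, (forall x, C x -> 0 <= pair phi x) /\
                  (forall x, F x <-> C x /\ pair phi x = 0).

Definition lin_span (S : V -> Prop) (x : V) : Prop :=
  exists (m : nat) (c : 'I_m -> rat) (v : 'I_m -> V),
    (forall k, S (v k)) /\ x = \sum_(k < m) c k *: v k.

Definition orth_proj (B : 'M[rat]_n) (L : V -> Prop) (x p : V) : Prop :=
  L p /\ forall y, L y -> ip B (x - p) y = 0.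

Definition cone_gen (g : seq V) (x : V) : Prop :=
  exists c : 'I_(size g) -> rat, (forall k, 0 <= c k) /\
    x = \sum_(k < size g) c k *: g`_k.

Definition strongly_convex (C : V -> Prop) : Prop :=
  forall x, C x -> C (- x) -> x = 0.

Definition is_fan (Sigma : seq (seq V)) : Prop :=
  [/\ forall s, s \in Sigma -> strongly_convex (cone_gen s),
      forall s F, s \in Sigma -> is_face (cone_gen s) F ->
        exists2 t, t \in Sigma & forall x, F x <-> cone_gen t x
    & forall s t, s \in Sigma -> t \in Sigma ->
        is_face (cone_gen s) (fun x => cone_gen s x /\ cone_gen t x) /\
        is_face (cone_gen t) (fun x => cone_gen s x /\ cone_gen t x)].

Definition fan_support (Sigma : seq (seq V)) (x : V) : Prop :=
  exists2 s, s \in Sigma & cone_gen s x.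

Definition W_support (r : nat) (alpha coalpha : 'I_r -> V) (Sigma : seq (seq V))
  (x : V) : Prop :=
  exists w : seq 'I_r, exists2 y, fan_support Sigma y & x = wact alpha coalpha w y.

Definition convex (S : V -> Prop) : Prop :=
  forall a b (t : rat), 0 <= t <= 1 -> S a -> S b -> S (t *: a + (1 - t) *: b).

End Defs.

(* Let [K] be the simple roots vanishing on the face [F], and [m] the average of the
   [W_K]-orbit of [x].  Then [m] is [W_K]-fixed, so it vanishes on [K]; on the other simple
   roots a dominant vector is dominated by every element of its [W_K]-orbit, so [m] is
   dominant, and thus lies in [F].  Since [W_K] fixes [span F] pointwise, [x - m] is
   orthogonal to [span F], whence [m = p].  By convexity [m = w y] with [y] in [|Sigma|];
   a [W]-orbit meets the chamber only once, so [m = y].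
   Both facts about dominant vectors come from Newman's lemma for the ascents
   [u -> s_i u] (when [<al_i, u> < 0]) on a finite orbit; local confluence is a rank-two
   computation in the dihedral groups of order 4, 6, 8 and 12. *)

From HB Require Import structures.
From mathcomp Require Import all_boot all_order all_algebra.
From mathcomp Require Import ring lra zify boolp.
From Stdlib Require Import Relation_Operators.
Set Implicit Arguments. Unset Strict Implicit. Unset Printing Implicit Defensive.
Import Order.TTheory GRing.Theory Num.Theory.
Local Open Scope ring_scope.

Section Newman.
Variables (T : Type) (step : T -> T -> Prop) (reach : T -> Prop) (mu : T -> nat).
Local Notation star := (clos_refl_trans_1n T step).

Definition normal_form u := forall v, ~ step u v.

Lemma star_step u v w : step u v -> star v w -> star u w.
Proof. exact: rt1n_trans. Qed.

Lemma star_trans u v w : star u v -> star v w -> star u w.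
Proof. by elim=> // a b c Sab _ IH /IH; apply: star_step. Qed.

Lemma normal_form_star u v : normal_form u -> star u v -> v = u.
Proof. by move=> Nu; case=> // a b /Nu. Qed.

Hypothesis step_reach : forall u v, reach u -> step u v -> reach v.
Hypothesis step_mu : forall u v, reach u -> step u v -> (mu v < mu u)%N.
Hypothesis local_confluence : forall u v1 v2, reach u -> step u v1 -> step u v2 ->
  exists2 z, star v1 z & star v2 z.

Lemma star_reach u v : reach u -> star u v -> reach v.
Proof. by move=> + S; elim: S => // a b c Sab _ IH Ra; apply/IH/(step_reach Ra Sab). Qed.

Lemma reach_mu_ind (P : T -> Prop) :
  (forall u, reach u -> (forall v, reach v -> (mu v < mu u)%N -> P v) -> P u) ->
  forall u, reach u -> P u.
Proof.
move=> IH u; have [k Ek] : exists k, mu u = k by exists (mu u).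
elim/ltn_ind: k u Ek => k IHk u Ek Ru; apply: (IH _ Ru) => v Rv; rewrite Ek => lt_vk.
exact: IHk lt_vk v erefl Rv.
Qed.

Lemma normal_form_exists u : reach u -> exists2 z, star u z & normal_form z.
Proof.
move: u; apply: reach_mu_ind => u Ru IH.
have [Nu|/existsNP[v /contrapT Suv]] := pselect (normal_form u).
  by exists u => //; apply: rt1n_refl.
have [z Svz Nz] := IH v (step_reach Ru Suv) (step_mu Ru Suv).
by exists z => //; exact: star_step Suv Svz.
Qed.

Lemma normal_form_unique u z1 z2 : reach u -> star u z1 -> star u z2 ->
  normal_form z1 -> normal_form z2 -> z1 = z2.
Proof.
move=> Ru; move: u Ru z1 z2; apply: reach_mu_ind => u Ru IH z1 z2 S1 S2.
case: S1 => [N1 N2|v1 y1 Sv1 Sy1 N1 N2]; first by rewrite (normal_form_star N1 S2).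
case: S2 N2 => [N2|v2 y2 Sv2 Sy2 N2]; first by case: (N2 _ Sv1).
have [Rv1 Rv2] := (step_reach Ru Sv1, step_reach Ru Sv2).
have [z Sz1 Sz2] := local_confluence Ru Sv1 Sv2.
have [y Szy Ny] := normal_form_exists (star_reach Rv1 Sz1).
have -> := IH v1 Rv1 (step_mu Ru Sv1) y1 y Sy1 (star_trans Sz1 Szy) N1 Ny.
by have -> := IH v2 Rv2 (step_mu Ru Sv2) y2 y Sy2 (star_trans Sz2 Szy) N2 Ny.
Qed.
End Newman.

Section Forms.
Variable n : nat.
Implicit Types (phi x y z : 'rV[rat]_n).

Lemma pairE phi x : pair phi x = (x *m phi^T) ord0 ord0.
Proof. by rewrite /pair !mxE; apply: eq_bigr => j _; rewrite !mxE mulrC. Qed.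

Lemma pairD phi x y : pair phi (x + y) = pair phi x + pair phi y.
Proof. by rewrite !pairE mulmxDl mxE. Qed.

Lemma pairZ phi c x : pair phi (c *: x) = c * pair phi x.
Proof. by rewrite !pairE -scalemxAl mxE. Qed.

Lemma pairN phi x : pair phi (- x) = - pair phi x.
Proof. by rewrite !pairE mulNmx mxE. Qed.

Lemma pairB phi x y : pair phi (x - y) = pair phi x - pair phi y.
Proof. by rewrite pairD pairN. Qed.

Lemma pair0 phi : pair phi 0 = 0.
Proof. by rewrite pairE mul0mx mxE. Qed.

Lemma pair_sum phi I (s : seq I) (P : pred I) (F : I -> 'rV[rat]_n) :
  pair phi (\sum_(i <- s | P i) F i) = \sum_(i <- s | P i) pair phi (F i).
Proof. exact: (big_morph _ (pairD phi) (pair0 phi)). Qed.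

Lemma pair_int phi x : integral phi -> integral x -> pair phi x \is a Num.int.
Proof. by move=> Iphi Ix; apply: rpred_sum => j _; apply: rpredM. Qed.

Lemma pair_lin_span_eq0 phi (F : 'rV[rat]_n -> Prop) x :
  (forall f, F f -> pair phi f = 0) -> lin_span F x -> pair phi x = 0.
Proof.
move=> phiF [m [c [v [Fv ->]]]]; rewrite pair_sum big1 // => k _.
by rewrite pairZ phiF ?mulr0.
Qed.

Variable B : 'M[rat]_n.

Lemma ipDl x y z : ip B (x + y) z = ip B x z + ip B y z.
Proof. by rewrite /ip !mulmxDl mxE. Qed.

Lemma ipZl c x z : ip B (c *: x) z = c * ip B x z.
Proof. by rewrite /ip -!scalemxAl mxE. Qed.

Lemma ipNl x z : ip B (- x) z = - ip B x z.
Proof. by rewrite /ip !mulNmx mxE. Qed.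

Lemma ipBl x y z : ip B (x - y) z = ip B x z - ip B y z.
Proof. by rewrite ipDl ipNl. Qed.

Lemma ip0l z : ip B 0 z = 0.
Proof. by rewrite /ip !mul0mx mxE. Qed.

Lemma ip_suml I (s : seq I) (P : pred I) (F : I -> 'rV[rat]_n) z :
  ip B (\sum_(i <- s | P i) F i) z = \sum_(i <- s | P i) ip B (F i) z.
Proof. exact: (big_morph (ip B ^~ z) (fun x y => ipDl x y z) (ip0l z)). Qed.

Hypothesis B_sym : B^T = B.

Lemma ipC x y : ip B x y = ip B y x.
Proof.
have trE (M : 'M[rat]_1) : M ord0 ord0 = M^T ord0 ord0 by rewrite mxE.
by rewrite /ip trE !trmx_mul trmxK B_sym mulmxA.
Qed.

Lemma ipZr c x z : ip B z (c *: x) = c * ip B z x.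
Proof. by rewrite ipC ipZl ipC. Qed.

Lemma ipNr x z : ip B z (- x) = - ip B z x.
Proof. by rewrite ipC ipNl ipC. Qed.

Lemma ipBr x y z : ip B z (x - y) = ip B z x - ip B z y.
Proof. by rewrite ipC ipBl !(ipC z). Qed.

Hypothesis B_pos : forall x, x != 0 -> 0 < ip B x x.

Lemma ip_self_ge0 x : 0 <= ip B x x.
Proof. by case: (eqVneq x 0) => [->|/B_pos/ltW//]; rewrite ip0l. Qed.

Lemma ip_self_eq0 x : ip B x x = 0 -> x = 0.
Proof. by case: (eqVneq x 0) => // /B_pos; rewrite lt_def => /andP[/eqP]. Qed.

Lemma orth_proj_unique (L : 'rV[rat]_n -> Prop) x p q :
  orth_proj B L x p -> L q -> (forall y, L y -> ip B (x - q) y = 0) -> p = q.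
Proof.
move=> [Lp xp_orth] Lq xq_orth.
have pq_orth y : L y -> ip B (p - q) y = 0.
  move=> Ly; have -> : p - q = (x - q) - (x - p) by apply/rowP => k; rewrite !mxE; ring.
  by rewrite ipBl xq_orth ?xp_orth ?subr0.
by apply/eqP; rewrite -subr_eq0; apply/eqP/ip_self_eq0; rewrite ipBr !pq_orth ?subr0.
Qed.
End Forms.

Section Mean.
Variable n : nat.
Implicit Types (l : seq 'rV[rat]_n) (x y : 'rV[rat]_n).

Definition mean l := (size l)%:R^-1 *: \sum_(v <- l) v.

Lemma size_gt0_rat l : l != [::] -> 0 < (size l)%:R :> rat.
Proof. by rewrite ltr0n lt0n size_eq0. Qed.

Lemma convex_mean (S : 'rV[rat]_n -> Prop) l : convex S -> l != [::] ->
  (forall v, v \in l -> S v) -> S (mean l).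
Proof.
move=> convS; elim: l => // a l IH _ Sl.
have Sa : S a by apply: Sl; rewrite mem_head.
have [->|l0] := eqVneq l [::]; first by rewrite /mean big_seq1 invr1 scale1r.
have k_gt0 := size_gt0_rat l0; set k := (size l)%:R in k_gt0.
have -> : mean (a :: l) = (k + 1)^-1 *: a + (1 - (k + 1)^-1) *: mean l.
  rewrite /mean big_cons /= -natr1 -/k; apply/rowP => j; rewrite !mxE; field; lra.
apply: convS => //; last by apply: IH => // v vl; apply: Sl; rewrite inE vl orbT.
by rewrite invr_ge0 invf_le1; lra.
Qed.

Lemma pair_mean_ge phi l a : l != [::] -> (forall v, v \in l -> a <= pair phi v) ->
  a <= pair phi (mean l).
Proof.
move=> l0 la; rewrite pairZ pair_sum mulrC ler_pdivlMr ?size_gt0_rat // mulr_natr.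
rewrite -iter_addr_0 -count_predT -big_const_seq !big_seq.
by apply: ler_sum => v; apply: la.
Qed.

Lemma ip_mean B l x y : l != [::] -> (forall v, v \in l -> ip B v y = ip B x y) ->
  ip B (mean l) y = ip B x y.
Proof.
move=> l0 lx; rewrite ipZl ip_suml (eq_big_seq _ lx) big_const_seq count_predT.
by rewrite iter_addr_0 -[ip B x y *+ _]mulr_natl mulrA mulVf ?mul1r // lt0r_neq0 ?size_gt0_rat.
Qed.
End Mean.

Section RootDatum.
Variables (n r : nat) (al co : 'I_r -> 'rV[rat]_n).
Implicit Types (x y : 'rV[rat]_n).
Local Notation s := (srefl al co).
Local Notation wa := (wact al co).

Lemma pair_srefl j i x :
  pair (al j) (s i x) = pair (al j) x - pair (al i) x * pair (al j) (co i).
Proof. by rewrite pairB pairZ. Qed.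

Lemma sreflD i x y : s i (x + y) = s i x + s i y.
Proof. by rewrite /srefl pairD scalerDl opprD addrACA. Qed.

Lemma sreflZ i c x : s i (c *: x) = c *: s i x.
Proof. by rewrite /srefl pairZ scalerBr scalerA. Qed.

Lemma srefl0 i : s i 0 = 0.
Proof. by rewrite /srefl pair0 scale0r subr0. Qed.

Lemma srefl_sum i I (l : seq I) (F : I -> 'rV[rat]_n) :
  s i (\sum_(k <- l) F k) = \sum_(k <- l) s i (F k).
Proof. exact: (big_morph _ (sreflD i) (srefl0 i)). Qed.

Lemma srefl_id i x : pair (al i) x = 0 -> s i x = x.
Proof. by move=> ix0; rewrite /srefl ix0 scale0r subr0. Qed.

Hypothesis cartan_diag : forall i, pair (al i) (co i) = 2.

Lemma pair_srefl_self i x : pair (al i) (s i x) = - pair (al i) x.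
Proof. by rewrite pair_srefl cartan_diag; ring. Qed.

Lemma srefl_invol i : involutive (s i).
Proof.
move=> x; rewrite [in LHS]/srefl pair_srefl_self scaleNr opprK.
by rewrite /srefl subrK.
Qed.

Lemma srefl_coroot i : s i (co i) = - co i.
Proof. by rewrite /srefl cartan_diag scaler_nat mulr2n opprD addrA subrr sub0r. Qed.

Lemma coroot_neq0 i : co i != 0.
Proof. by apply/eqP => co0; have := cartan_diag i; rewrite co0 pair0. Qed.

Variable B : 'M[rat]_n.
Hypothesis B_sym : B^T = B.
Hypothesis B_pos : forall x, x != 0 -> 0 < ip B x x.
Hypothesis B_inv : forall i x y, ip B (s i x) (s i y) = ip B x y.

Lemma ip_srefl_fixr i x y : pair (al i) y = 0 -> ip B (s i x) y = ip B x y.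
Proof. by move=> iy0; rewrite -{1}(srefl_id iy0) B_inv. Qed.

Lemma ip_wact_fixr w x y : (forall i, i \in w -> pair (al i) y = 0) ->
  ip B (wa w x) y = ip B x y.
Proof.
elim: w => //= i w IH wy0; rewrite ip_srefl_fixr ?wy0 ?mem_head //.
by apply: IH => k kw; rewrite wy0 // inE kw orbT.
Qed.

Lemma coroot_norm_gt0 i : 0 < ip B (co i) (co i).
Proof. exact/B_pos/coroot_neq0. Qed.

Lemma ip_coroot i x : ip B x (co i) = pair (al i) x * ip B (co i) (co i) / 2.
Proof.
have := B_inv i x (co i); rewrite srefl_coroot (ipNr B_sym) ipBl ipZl.
move: (ip B x (co i)) (pair (al i) x) (ip B (co i) (co i)) => t a N; lra.
Qed.

Hypothesis cartan_offdiag : forall i j, i != j -> pair (al i) (co j) <= 0.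
Hypothesis cartan_eq0_sym : forall i j, pair (al i) (co j) = 0 <-> pair (al j) (co i) = 0.
Hypothesis cartan_int : forall i j, pair (al i) (co j) \is a Num.int.

Definition ascent (P : pred 'I_r) x y := exists i, [/\ P i, pair (al i) x < 0 & y = s i x].
Local Notation star P := (clos_refl_trans_1n _ (ascent P)).

(* With [A = <al_i, co_j>] and [A' = <al_j, co_i>], if [A A' >= 4] then [2 co_j - A co_i]
   has norm [(4 - A A') |co_j|^2 <= 0]; so [co_j] is a nonpositive multiple of [co_i], and
   [ip B u co_i], [ip B u co_j] (proportional to [<al_i, u>], [<al_j, u>]) cannot both be
   negative. *)
Lemma rank2_cartan_lt4 i j u : i != j -> pair (al i) u < 0 -> pair (al j) u < 0 ->
  pair (al i) (co j) * pair (al j) (co i) < 4.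
Proof.
move=> ij iu ju; set A := pair (al i) (co j); set A' := pair (al j) (co i).
rewrite ltNge; apply/negP => ge4.
pose v := 2 *: co j - A *: co i.
have v_norm : ip B v v = (4 - A * A') * ip B (co j) (co j).
  rewrite {2}/v (ipBr B_sym) !(ipZr B_sym) (ip_coroot j v) (ip_coroot i v).
  by rewrite !pairB !pairZ !cartan_diag -/A -/A'; field.
have v0 : v = 0.
  apply: (ip_self_eq0 B_pos); apply: le_anti; rewrite ip_self_ge0 // andbT v_norm.
  by rewrite pmulr_lle0 ?coroot_norm_gt0 // subr_le0.
have := congr1 (ip B u) (subr0_eq v0).
rewrite !(ipZr B_sym) (ip_coroot j u) (ip_coroot i u) -/A.
have lhs_lt0 : pair (al j) u * ip B (co j) (co j) / 2 < 0.
  by rewrite pmulr_llt0 // pmulr_llt0 // coroot_norm_gt0.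
have rhs_ge0 : 0 <= A * (pair (al i) u * ip B (co i) (co i) / 2).
  by rewrite mulr_le0 ?cartan_offdiag // pmulr_lle0 // pmulr_lle0 ?coroot_norm_gt0 // ltW.
move: lhs_lt0 rhs_ge0; move: (_ * _ / 2) (A * _) => X Y; lra.
Qed.

Lemma cartan_rank2_cases (z z' : int) :
  z <= 0 -> z' <= 0 -> z * z' < 4 -> (z = 0 <-> z' = 0) ->
  z = 0 /\ z' = 0 \/ z = -1 /\ z' = -1 \/ z = -1 /\ z' = -2 \/ z = -2 /\ z' = -1
    \/ z = -1 /\ z' = -3 \/ z = -3 /\ z' = -1.
Proof.
move=> le0 le0' lt4 zz'0; have [z0|nz] := eqVneq z 0; first by left; split=> //; apply/zz'0.
have nz' : z' != 0 by apply: contra_neq nz => /zz'0.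
have [z'le z'ge] : z' <= -1 /\ -3 <= z' by nia.
have : z = -1 \/ z = -2 \/ z = -3 by nia.
by case=> [|[]] ez; rewrite ez in lt4 *; lia.
Qed.

(* A word in [s_i] (true) and [s_j] (false) acting on [u + p co_i + q co_j], tracked through
   the coordinates [(p, q)], where [a = <al_i, u>], [b = <al_j, u>], [A = <al_i, co_j>] and
   [A' = <al_j, co_i>].  [rank2_ascending] asks every step to be an ascent. *)
Fixpoint rank2_ascending (a b A A' : rat) (l : seq bool) (p q : rat) : Prop :=
  if l is c :: l' then
    if c then a + 2 * p + A * q < 0 /\ rank2_ascending a b A A' l' (- p - a - A * q) q
    else b + A' * p + 2 * q < 0 /\ rank2_ascending a b A A' l' p (- q - b - A' * p)
  else True.

Fixpoint rank2_endpoint (a b A A' : rat) (l : seq bool) (p q : rat) : rat * rat :=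
  if l is c :: l' then
    if c then rank2_endpoint a b A A' l' (- p - a - A * q) q
    else rank2_endpoint a b A A' l' p (- q - b - A' * p)
  else (p, q).

Definition alternating (k : nat) (c : bool) := mkseq (fun t => odd t (+) c) k.

Section Rank2.
Variables (P : pred 'I_r) (i j : 'I_r) (u : 'rV[rat]_n).
Hypotheses (Pi : P i) (Pj : P j).
Let a := pair (al i) u.
Let b := pair (al j) u.
Let A := pair (al i) (co j).
Let A' := pair (al j) (co i).
Let walk (pq : rat * rat) := u + pq.1 *: co i + pq.2 *: co j.

Lemma rank2_ascending_star l p q : rank2_ascending a b A A' l p q ->
  star P (walk (p, q)) (walk (rank2_endpoint a b A A' l p q)).
Proof.
elim: l p q => [|[] l IH] p q /=; first by constructor.
  case=> asc /IH; apply: star_step; exists i; rewrite /walk /=; split=> //.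
    by rewrite !pairD !pairZ cartan_diag -/a -/A; lra.
  by rewrite /srefl !pairD !pairZ cartan_diag -/a -/A; apply/rowP => k; rewrite !mxE; ring.
case=> asc /IH; apply: star_step; exists j; rewrite /walk /=; split=> //.
  by rewrite !pairD !pairZ cartan_diag -/b -/A'; lra.
by rewrite /srefl !pairD !pairZ cartan_diag -/b -/A'; apply/rowP => k; rewrite !mxE; ring.
Qed.

Lemma rank2_join_by_alternating k :
  rank2_ascending a b A A' (alternating k false) (- a) 0 ->
  rank2_ascending a b A A' (alternating k true) 0 (- b) ->
  rank2_endpoint a b A A' (alternating k false) (- a) 0 =
  rank2_endpoint a b A A' (alternating k true) 0 (- b) ->
  exists2 z, star P (s i u) z & star P (s j u) z.
Proof.
move=> /rank2_ascending_star S1 /rank2_ascending_star S2 same_end.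
have [Ei Ej] : s i u = walk (- a, 0) /\ s j u = walk (0, - b).
  by rewrite /walk /= !scale0r !addr0 !scaleNr.
by rewrite Ei Ej; exists (walk (rank2_endpoint a b A A' (alternating k false) (- a) 0)) => //;
  rewrite same_end.
Qed.
End Rank2.

(* Both ascents end at the image of [u] under the longest element of the dihedral group
   [<s_i, s_j>], of length 2, 3, 4 or 6 according as [A A'] is 0, 1, 2 or 3. *)
Lemma rank2_local_confluence (P : pred 'I_r) i j u : P i -> P j -> i != j ->
  pair (al i) u < 0 -> pair (al j) u < 0 ->
  exists2 z, star P (s i u) z & star P (s j u) z.
Proof.
move=> Pi Pj ij iu ju.
have /intrP[z EA] := cartan_int i j; have /intrP[z' EA'] := cartan_int j i.
have lt4 : z * z' < 4 by rewrite -(ltr_int rat) intrM -EA -EA' (rank2_cartan_lt4 ij iu ju).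
have [le0 le0'] : z <= 0 /\ z' <= 0.
  by rewrite -!(ler_int rat) -EA -EA' !cartan_offdiag // eq_sym.
have zz'0 : z = 0 <-> z' = 0.
  have eq0E (x : int) (y : rat) : y = x%:~R -> (y = 0 <-> x = 0).
    by move=> ->; split=> [/eqP|->//]; rewrite intr_eq0 => /eqP.
  by rewrite -(eq0E _ _ EA) -(eq0E _ _ EA'); apply: cartan_eq0_sym.
have join k := @rank2_join_by_alternating P i j u Pi Pj k.
case: (cartan_rank2_cases le0 le0' lt4 zz'0) EA EA' => {lt4 le0 le0' zz'0}
    [[-> ->]|[[-> ->]|[[-> ->]|[[-> ->]|[[-> ->]|[-> ->]]]]]] EA EA';
  [apply: (join 1) | apply: (join 2) | apply: (join 3) | apply: (join 3)
  | apply: (join 5) | apply: (join 5)];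
  rewrite ?EA ?EA' /=; first [by congr (_, _); ring | by repeat split; lra].
Qed.

Lemma ascent_local_confluence (P : pred 'I_r) u v1 v2 : ascent P u v1 -> ascent P u v2 ->
  exists2 z, star P v1 z & star P v2 z.
Proof.
move=> [i [Pi iu ->]] [j [Pj ju ->]].
have [<-|ij] := eqVneq i j; first by exists (s i u); apply: rt1n_refl.
exact: rank2_local_confluence.
Qed.

Lemma star_ascent_pair_le (P : pred 'I_r) j u v : ~~ P j -> star P u v ->
  pair (al j) v <= pair (al j) u.
Proof.
move=> Pj; elim=> // x _ y [i [Pi ix ->]] _ /le_trans; apply.
have ji : j != i by apply: contraNneq Pj => ->.
by rewrite pair_srefl gerBl mulr_le0 ?cartan_offdiag // ltW.
Qed.

(* Ascents increase [ip B _ rho], so this count is a termination measure on a finite orbit. *)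
Lemma ascent_count_lt (P : pred 'I_r) (rho : 'rV[rat]_n) (l : seq 'rV[rat]_n) u v :
  (forall i, P i -> 0 < pair (al i) rho) -> ascent P u v -> v \in l ->
  (count (fun z => ip B v rho < ip B z rho)%R l <
   count (fun z => ip B u rho < ip B z rho)%R l)%N.
Proof.
move=> rho_pos [i [Pi iu ->]] vl.
have uv : ip B u rho < ip B (s i u) rho.
  rewrite ipBl ipZl (ipC B_sym (co i)) ip_coroot ltrDl -mulNr.
  by rewrite !mulr_gt0 ?invr_gt0 ?oppr_gt0 ?rho_pos ?coroot_norm_gt0.
elim: l vl => // y l IH; rewrite inE => /predU1P[<-|vl] /=.
  by rewrite ltxx uv add0n add1n ltnS sub_count // => z /(lt_trans uv).
rewrite -addnS leq_add ?IH //.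
by case: ltP => // /(lt_trans uv) ->.
Qed.

Definition dominant (K : pred 'I_r) x := forall i, K i -> 0 <= pair (al i) x.

Variable ws : seq (seq 'I_r).
Hypothesis ws_complete : forall w, exists2 w', w' \in ws & forall x, wa w x = wa w' x.

Section Parabolic.
Variable K : pred 'I_r.

(* The simple roots of [K] that do not vanish on the whole [K]-dominant cone; the other
   ones fix that cone pointwise, and may have no strictly dominant vector to climb towards. *)
Definition essential : pred 'I_r :=
  fun i => K i && `[< exists2 c, dominant K c & 0 < pair (al i) c >].

Lemma essential_sub i : essential i -> K i.
Proof. by case/andP. Qed.

Lemma inessential_pair_eq0 k c : K k -> ~~ essential k -> dominant K c -> pair (al k) c = 0.
Proof.
move=> Kk Ek Kc; apply/eqP; rewrite eq_le (Kc k Kk) andbT leNgt.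
by move: Ek; apply: contra => kc; rewrite /essential Kk; apply/asboolP; exists c.
Qed.

Lemma inessential_coroot_eq0 k i : K k -> ~~ essential k -> essential i ->
  pair (al k) (co i) = 0.
Proof.
move=> Kk Ek /andP[Ki /asboolP[c Kc ic]].
pose c' := c - (pair (al i) c / 2) *: co i.
have Kc' : dominant K c'.
  move=> j Kj; rewrite pairB pairZ; have [->|ji] := eqVneq j i.
    by rewrite cartan_diag divfK // subrr.
  by rewrite subr_ge0 (le_trans _ (Kc j Kj)) // mulr_ge0_le0 ?cartan_offdiag // divr_ge0 // ltW.
have := inessential_pair_eq0 Kk Ek Kc'.
rewrite pairB pairZ (inessential_pair_eq0 Kk Ek Kc) sub0r => /eqP.
by rewrite oppr_eq0 !mulf_eq0 invr_eq0 (gt_eqF ic) => /eqP.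
Qed.

Lemma essential_regular : exists rho, forall i, essential i -> 0 < pair (al i) rho.
Proof.
suff [rho [_ rho_pos]] : exists rho, dominant K rho /\
    forall i, i \in enum 'I_r -> essential i -> 0 < pair (al i) rho.
  by exists rho => i; apply/rho_pos; rewrite mem_enum.
elim: (enum 'I_r) => [|i l [rho [Krho rho_pos]]].
  by exists 0; split=> // i _; rewrite pair0.
have [Ei|Ei] := boolP (essential i); last first.
  by exists rho; split=> // j; rewrite inE => /predU1P[->|/rho_pos//]; rewrite (negbTE Ei).
have /andP[_ /asboolP[c Kc ic]] := Ei.
exists (rho + c); split=> [j Kj|j]; first by rewrite pairD addr_ge0 ?Krho ?Kc.
rewrite inE pairD => /predU1P[->|/rho_pos jl] Ej.
  by rewrite ltr_wpDl ?Krho ?essential_sub.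
by rewrite ltr_pwDl ?jl ?Kc ?essential_sub.
Qed.

(* Ascents on the finite orbit of [x] terminate and are locally confluent, so by Newman's
   lemma their normal forms are unique; [x] is one. *)
Lemma star_essential_wact x w : (forall i, essential i -> 0 <= pair (al i) x) ->
  all essential w -> star essential (wa w x) x.
Proof.
move=> Ex; have [rho rho_pos] := essential_regular.
pose reach u := exists w, u = wa w x.
pose mu u := count (fun z => ip B u rho < ip B z rho)%R [seq wa w x | w <- ws].
have step_reach u v : reach u -> ascent essential u v -> reach v.
  by move=> [w' ->] [i [_ _ ->]]; exists (i :: w').
have step_mu u v : reach u -> ascent essential u v -> (mu v < mu u)%N.
  move=> Ru uv; apply: (ascent_count_lt rho_pos uv).
  have [w' ->] := step_reach _ _ Ru uv; have [w'' w''ws ->] := ws_complete w'.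
  exact: (map_f (wa^~ x)).
have confluence u v1 v2 : reach u -> ascent essential u v1 -> ascent essential u v2 ->
  exists2 z, star essential v1 z & star essential v2 z.
  by move=> _; apply: ascent_local_confluence.
have Nx : normal_form (ascent essential) x.
  by move=> v [i [Ei ix _]]; move: (Ex i Ei); rewrite leNgt ix.
elim: w => [_|i w IH] /=; first exact: rt1n_refl.
case/andP=> Ei /IH {IH} Sx; set y := wa w x in Sx *.
have Ry : reach y by exists w.
case: (ltrgtP (pair (al i) y) 0) => iy.
- have yiy : ascent essential y (s i y) by exists i.
  have [z Sz Nz] := normal_form_exists step_reach step_mu (step_reach _ _ Ry yiy).
  by rewrite (normal_form_unique step_reach step_mu confluence Ry Sx (star_step yiy Sz) Nx Nz).
- by apply: star_step Sx; exists i; rewrite pair_srefl_self oppr_lt0 srefl_invol.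
- by rewrite srefl_id.
Qed.

Lemma inessential_pair_wact k w u : K k -> ~~ essential k -> all essential w ->
  pair (al k) u = 0 -> pair (al k) (wa w u) = 0.
Proof.
move=> Kk Ek; elim: w => //= i w IH /andP[Ei /IH{}IH] /IH ku.
by rewrite pair_srefl ku (inessential_coroot_eq0 Kk Ek Ei) mulr0 subr0.
Qed.

Lemma wact_filter_essential u w : dominant K u -> all K w ->
  wa w u = wa (filter essential w) u.
Proof.
move=> Ku; elim: w => //= i w IH /andP[Ki /IH ->].
case: ifP => //= /negbT Ei.
by rewrite srefl_id // (inessential_pair_wact Ki Ei) ?filter_all ?(inessential_pair_eq0 Ki Ei).
Qed.

Lemma dominant_pair_le_wact x w j : dominant K x -> all K w -> ~~ K j ->
  pair (al j) x <= pair (al j) (wa w x).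
Proof.
move=> Kx Kw Kj; rewrite (wact_filter_essential Kx Kw).
apply: star_ascent_pair_le (star_essential_wact _ (filter_all essential w)).
  by apply: contra Kj; apply: essential_sub.
by move=> i /essential_sub; apply: Kx.
Qed.

Lemma dominant_wact_eq x w : dominant K x -> dominant K (wa w x) -> all K w -> wa w x = x.
Proof.
move=> Kx Kwx Kw; rewrite (wact_filter_essential Kx Kw) in Kwx *.
have Ex i : essential i -> 0 <= pair (al i) x by move/essential_sub; apply: Kx.
apply/esym; apply: normal_form_star (star_essential_wact Ex (filter_all essential w)).
by move=> v [i [Ei iv _]]; move: (Kwx i (essential_sub Ei)); rewrite leNgt iv.
Qed.
End Parabolic.

Lemma chamber_wact_eq x w : chamber al x -> chamber al (wa w x) -> wa w x = x.
Proof.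
move=> Cx Cwx; apply: (@dominant_wact_eq predT) => [i _|i _|]; [exact: Cx|exact: Cwx|].
exact/allP.
Qed.

Section ParabolicOrbit.
Variables (K : pred 'I_r) (x : 'rV[rat]_n).

Definition parabolic_orbit : seq 'rV[rat]_n :=
  [seq y <- undup [seq wa w x | w <- ws] | `[< exists2 w, all K w & y = wa w x >]].

Lemma mem_parabolic_orbit y : y \in parabolic_orbit <-> exists2 w, all K w & y = wa w x.
Proof.
rewrite mem_filter mem_undup; split=> [/andP[/asboolP //]|[w Kw yE]].
rewrite (asboolT (ex_intro2 _ _ w Kw yE)) /= yE.
by have [w' w'ws ->] := ws_complete w; apply: (map_f (wa^~ x)).
Qed.

Lemma parabolic_orbit_neq0 : parabolic_orbit != [::].
Proof.
have : x \in parabolic_orbit by apply/mem_parabolic_orbit; exists [::].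
by case: parabolic_orbit.
Qed.

Lemma perm_parabolic_orbit i : K i ->
  perm_eq parabolic_orbit [seq s i y | y <- parabolic_orbit].
Proof.
move=> Ki; have s_inj := can_inj (srefl_invol i).
apply: uniq_perm; rewrite ?map_inj_uniq ?filter_uniq ?undup_uniq // => y.
rewrite -{2}(srefl_invol i y) mem_map //; apply/idP/idP.
  move/mem_parabolic_orbit=> [w Kw ->]; apply/mem_parabolic_orbit.
  by exists (i :: w); rewrite //= Ki.
move/mem_parabolic_orbit=> [w Kw yE]; apply/mem_parabolic_orbit; exists (i :: w); rewrite /= ?Ki //.
by rewrite -yE srefl_invol.
Qed.

Lemma srefl_mean_parabolic_orbit i : K i -> s i (mean parabolic_orbit) = mean parabolic_orbit.
Proof.
move=> Ki; rewrite /mean sreflZ srefl_sum -(big_map (s i) xpredT id).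
by rewrite -(perm_big _ (perm_parabolic_orbit Ki)).
Qed.

Lemma pair_mean_parabolic_orbit i : K i -> pair (al i) (mean parabolic_orbit) = 0.
Proof.
move/srefl_mean_parabolic_orbit/(congr1 (pair (al i))); rewrite pair_srefl_self.
by move: (pair _ _) => a; lra.
Qed.

Lemma chamber_mean_parabolic_orbit : chamber al x -> chamber al (mean parabolic_orbit).
Proof.
move=> Cx i; have [Ki|Ki] := boolP (K i); first by rewrite pair_mean_parabolic_orbit.
apply: pair_mean_ge parabolic_orbit_neq0 _ => _ /mem_parabolic_orbit[w Kw ->].
by apply: le_trans (Cx i) (dominant_pair_le_wact _ Kw Ki) => j _.
Qed.

Lemma ip_sub_mean_parabolic_orbit y : (forall i, K i -> pair (al i) y = 0) ->
  ip B (x - mean parabolic_orbit) y = 0.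
Proof.
move=> Ky; rewrite ipBl (@ip_mean _ B _ x y parabolic_orbit_neq0) ?subrr //.
move=> _ /mem_parabolic_orbit[w Kw ->]; apply: ip_wact_fixr => i iw.
by apply: Ky; move/allP: Kw; apply.
Qed.

Lemma mean_parabolic_orbit_mem (S : 'rV[rat]_n -> Prop) : convex S ->
  (forall w, S (wa w x)) -> S (mean parabolic_orbit).
Proof.
move=> convS Sx; apply: convex_mean parabolic_orbit_neq0 _ => //.
by move=> _ /mem_parabolic_orbit[w _ ->].
Qed.
End ParabolicOrbit.
End RootDatum.

Section ChamberFaces.
Variables (n r : nat) (al : 'I_r -> 'rV[rat]_n) (F : 'rV[rat]_n -> Prop).
Hypothesis F_face : is_face (chamber al) F.

Lemma face_interior_point : exists2 f0, F f0 &
  forall i, ~ (forall f, F f -> pair (al i) f = 0) -> 0 < pair (al i) f0.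
Proof.
have [phi [_ FE]] := F_face.
suff [f0 Ff0 f0_pos] : exists2 f0, F f0 &
    forall i, i \in enum 'I_r -> ~ (forall f, F f -> pair (al i) f = 0) -> 0 < pair (al i) f0.
  by exists f0 => // i; apply: f0_pos; rewrite mem_enum.
elim: (enum 'I_r) => [|i l [f0 Ff0 f0_pos]].
  by exists 0 => //; apply/FE; split=> [i|]; rewrite pair0.
have [iF|/existsNP[g /not_implyP[Fg /eqP ig]]] := pselect (forall f, F f -> pair (al i) f = 0).
  by exists f0 => // j; rewrite inE => /predU1P[->|/f0_pos//].
have [/FE[Cf0 phif0] /FE[Cg phig]] := (Ff0, Fg).
exists (f0 + g); first by apply/FE; split=> [j|]; rewrite pairD ?addr_ge0 // phif0 phig addr0.
move=> j; rewrite inE pairD => /predU1P[->|/f0_pos jl] jF.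
  by rewrite ltr_wpDl ?Cf0 // lt_def ig Cg.
by rewrite ltr_pwDl ?jl ?Cg.
Qed.

(* [c] is dominated on every simple root by a multiple of the relative interior point [f0]
   of [F], and [phi] vanishes at [f0]. *)
Lemma face_chamber_mem c : chamber al c ->
  (forall i, (forall f, F f -> pair (al i) f = 0) -> pair (al i) c = 0) -> F c.
Proof.
move=> Cc cF; have [phi [phi_ge0 FE]] := F_face.
have [f0 Ff0 f0_pos] := face_interior_point; have [Cf0 phif0] := (FE f0).1 Ff0.
pose N := \sum_(i | 0 < pair (al i) f0) pair (al i) c / pair (al i) f0.
have N_ge0 : 0 <= N by apply: sumr_ge0 => i if0; apply: divr_ge0 (Cc i) (ltW if0).
have C_diff : chamber al (N *: f0 - c).
  move=> i; rewrite pairB pairZ subr_ge0; have [if0|if0] := ltP 0 (pair (al i) f0).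
    rewrite /N (bigD1 i) //= mulrDl divfK ?gt_eqF // lerDl.
    apply: mulr_ge0 (ltW if0); apply: sumr_ge0 => j /andP[jf0 _].
    exact: divr_ge0 (Cc j) (ltW jf0).
  have iF : forall f, F f -> pair (al i) f = 0.
    by apply: contrapT => /f0_pos; rewrite ltNge if0.
  by rewrite cF // mulr_ge0 ?Cf0.
apply/FE; split=> //; apply/eqP; rewrite eq_le phi_ge0 // andbT.
by have := phi_ge0 _ C_diff; rewrite pairB pairZ phif0 mulr0 sub0r oppr_ge0.
Qed.
End ChamberFaces.

Theorem lemma7p4 (n r : nat) (alpha coalpha : 'I_r -> 'rV[rat]_n)
  (B : 'M[rat]_n) (Sigma : seq (seq 'rV[rat]_n)) :
  reductive_root_datum alpha coalpha ->
  W_invariant_inner_product alpha coalpha B ->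
  is_fan Sigma ->
  (forall x, fan_support Sigma x -> chamber alpha x) ->
  convex (W_support alpha coalpha Sigma) ->
  forall (x : 'rV[rat]_n) (F : 'rV[rat]_n -> Prop) (p : 'rV[rat]_n),
    fan_support Sigma x ->
    is_face (chamber alpha) F ->
    orth_proj B (lin_span F) x p ->
    fan_support Sigma p.
Proof.
move=> [al_co_int cartan_diag cartan_offdiag cartan_eq0_sym [ws ws_complete]]
  [B_sym B_pos B_inv] _ Sigma_chamber W_convex x F p Sx F_face p_proj.
have cartan_int i j : pair (alpha i) (coalpha j) \is a Num.int.
  by apply: pair_int; [case: (al_co_int i) | case: (al_co_int j)].
pose K i := `[< forall f, F f -> pair (alpha i) f = 0 >].
pose m := mean (parabolic_orbit alpha coalpha ws K x).
have Cm : chamber alpha m.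
  exact: (chamber_mean_parabolic_orbit cartan_diag B_sym B_pos B_inv cartan_offdiag
    cartan_eq0_sym cartan_int ws_complete K (Sigma_chamber x Sx)).
have Fm : F m.
  apply: (face_chamber_mem F_face Cm) => i Fi.
  by apply: (pair_mean_parabolic_orbit cartan_diag ws_complete); apply/asboolP.
have -> : p = m.
  apply: (orth_proj_unique B_sym B_pos p_proj).
    by exists 1%N, (fun=> 1), (fun=> m); split=> //; rewrite big_ord1 scale1r.
  move=> y Fy; apply: (ip_sub_mean_parabolic_orbit B_inv ws_complete) => i /asboolP Fi.
  exact: pair_lin_span_eq0 Fi Fy.
have [w [y Sy m_wy]] : W_support alpha coalpha Sigma m.
  by apply: (mean_parabolic_orbit_mem ws_complete) => // w; exists w; exists x.
rewrite m_wy in Cm *; by rewrite (chamber_wact_eq cartan_diag B_sym B_pos B_inv cartan_offdiag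
  cartan_eq0_sym cartan_int ws_complete (Sigma_chamber y Sy) Cm).
Qed.
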